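(* Let $m \ge 1$ be an integer and let $c : [-1,1] \to \mathbb{R}$ be continuous with $c^{-1}(1) = \{-1, 0, 1\}$ and such that $\theta \mapsto \theta\, c(\theta)$ is strictly increasing on $[-1,1]$. Let $[a,b]$ be an angular interval with $0 < b - a < 2\pi$, split into $m$ equal consecutive subintervals $[a_{i-1}, a_i]$, $i = 1,\dots,m$ ($a_0 = a$, $a_m = b$), and let $\varphi_i : [a_{i-1}, a_i] \to [-1,1]$ be the increasing affine bijection. Define $F : \mathbb{R}^2 \to \mathbb{R}^2$ by $F(o) = o$ and, in the polar coordinates described below, $$F(\theta, r) = \big(\varphi_i^{-1}(\varphi_i(\theta)\, c(\varphi_i(\theta))),\; r + 1 - 2\varphi_i(\theta)^2\big) \quad\text{if } \theta \in [a_{i-1}, a_i],$$ and $F(\theta, r) = (\theta, r - 1)$ if $\theta \notin [a,b]$. Then $o$ is an isolated fixed point of every iterate $F^n$, and: (1) if $c([-1,1]) \subset [1/2, 1]$, then $i(F^n, o) = 1 - m$ for every $n \ge 1$; (2) if $c([-1,1]) \subset [1, 2]$, then $i(F^n, o) = 1 + m$ for every $n \ge 1$. In particular (case $m=1$) the corresponding maps have indices $i(F^n,o)=0$ for all $n$ in case (1) and $i(F^n,o)=2$ for all $n$ in case (2).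
   Context: Polar coordinates on $\mathbb{R}^2\setminus\{o\}$ ($o$ the origin): a point is written $(\theta, r)$ with $\theta \in (-\pi,\pi]$ an angle and $r \in \mathbb{R}$, corresponding to $e^{r}(\cos\theta, \sin\theta)$; thus the origin corresponds to $r = -\infty$. $i(g,o)$ denotes the fixed point index of $g$ at the isolated fixed point $o$ (degree of $x \mapsto (x-g(x))/\|x-g(x)\|$ on a small circle around $o$). *)

From Stdlib Require Import Reals Lra Lia ZArith.
Open Scope R_scope.

Definition pt := (R * R)%type.
Definition origin : pt := (0, 0).
Definition vnorm (p : pt) : R := sqrt (fst p * fst p + snd p * snd p).
Definition vsub (p q : pt) : pt := (fst p - fst q, snd p - snd q).
Definition vscal (s : R) (p : pt) : pt := (s * fst p, s * snd p).

Definition polar (theta r : R) : pt := (exp r * cos theta, exp r * sin theta).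

Definition cont_on (f : R -> R) (lo hi : R) : Prop :=
  forall x, lo <= x <= hi -> forall eps, eps > 0 ->
    exists delta, delta > 0 /\
      forall y, lo <= y <= hi -> Rabs (y - x) < delta -> Rabs (f y - f x) < eps.

Definition loop_degree (u : R -> pt) (k : Z) : Prop :=
  exists th : R -> R, continuity th /\
    (forall t, 0 <= t <= 1 -> u t = (cos (th t), sin (th t))) /\
    th 1 - th 0 = 2 * PI * IZR k.

Definition circ (rho t : R) : pt := (rho * cos (2 * PI * t), rho * sin (2 * PI * t)).

Definition isolated_fixed_point (g : pt -> pt) : Prop :=
  g origin = origin /\
  exists eps, eps > 0 /\ forall x, 0 < vnorm x < eps -> g x <> x.

Definition fixed_point_index (g : pt -> pt) (k : Z) : Prop :=
  exists eps, eps > 0 /\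
    (forall x, 0 < vnorm x < eps -> g x <> x) /\
    forall rho, 0 < rho < eps ->
      loop_degree (fun t => let x := circ rho t in
                            vscal (/ vnorm (vsub x (g x))) (vsub x (g x))) k.

Definition apt (a b : R) (m : nat) (i : nat) : R := a + INR i * (b - a) / INR m.
Definition phi (a b : R) (m i : nat) (th : R) : R :=
  2 * (th - apt a b m (i - 1)) / (apt a b m i - apt a b m (i - 1)) - 1.
Definition phi_inv (a b : R) (m i : nat) (s : R) : R :=
  apt a b m (i - 1) + (s + 1) * (apt a b m i - apt a b m (i - 1)) / 2.

(* F is the map of the statement (polar angles taken modulo 2 pi). *)
Definition is_F (a b : R) (m : nat) (c : R -> R) (F : pt -> pt) : Prop :=
  F origin = origin /\
  (forall (i : nat) (th r : R), (1 <= i <= m)%nat ->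
     apt a b m (i - 1) <= th <= apt a b m i ->
     F (polar th r) =
       polar (phi_inv a b m i (phi a b m i th * c (phi a b m i th)))
             (r + 1 - 2 * (phi a b m i th) ^ 2)) /\
  (forall th r : R, (forall k : Z, ~ (a <= th + 2 * PI * IZR k <= b)) ->
     F (polar th r) = polar th (r - 1)).

(* Write [x = polar th r] with [a <= th < a + 2 PI]. Off [[a, b]] the iterate
   [F^n x = polar th (r - n)] is radial. On the i-th piece, in the normalized
   angle [s = phi_i th] in [[-1, 1]], [F^n] turns by
   [D s = (g^n s - s) (b - a) / (2 m)] and moves radially by
   [S s = sum_{k < n} (1 - 2 (g^k s)^2)], where [g s = s c(s)]; so [x - F^n x]
   is [exp r] times the vector [W s = (1 - e^S cos D, - e^S sin D)] rotated by
   [th]. Since the only fixed points of [g^n] are [-1, 0, 1], where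
   [S = -n, n, -n], [W] never vanishes; it starts and ends on the positive real
   axis, meets the negative one only at [s = 0], and stays in opposite open
   half-planes on [(-1, 0)] and [(0, 1)], the side being dictated by the sign
   of [c - 1]. So [W] turns exactly once per piece, clockwise if [c <= 1] and
   counterclockwise if [c >= 1], and adding the one turn of [th] around the
   circle gives the degree [1 -/+ m]. *)

From Stdlib Require Import Reals Lra Lia ZArith.
Open Scope R_scope.

Lemma continuity_pt_intro (f : R -> R) (x : R) :
  (forall eps, 0 < eps -> exists d, 0 < d /\
     forall y, Rabs (y - x) < d -> Rabs (f y - f x) < eps) ->
  continuity_pt f x.
Proof.
  intros H eps Heps. destruct (H eps Heps) as [d [Hd Hy]].
  exists d; split; [exact Hd|]. intros y [_ Hyx]. exact (Hy y Hyx).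
Qed.

Lemma continuity_pt_elim (f : R -> R) (x : R) :
  continuity_pt f x -> forall eps, 0 < eps -> exists d, 0 < d /\
    forall y, Rabs (y - x) < d -> Rabs (f y - f x) < eps.
Proof.
  intros H eps Heps. destruct (H eps Heps) as [d [Hd Hy]].
  exists d; split; [exact Hd|]. intros y Hyx.
  destruct (Req_dec y x) as [->|Hne].
  - unfold Rminus. rewrite Rplus_opp_r, Rabs_R0. exact Heps.
  - apply (Hy y). split; [split; [exact I|auto]|exact Hyx].
Qed.

Lemma continuity_pt_ext (f g : R -> R) (x : R) :
  (forall y, f y = g y) -> continuity_pt f x -> continuity_pt g x.
Proof. intros Hfg. apply (continuity_pt_locally_ext f g 1 x); [lra|auto]. Qed.

Lemma continuity_if_Rle (p q : R -> R) (m : R) :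
  continuity p -> continuity q -> p m = q m ->
  continuity (fun x => if Rle_dec x m then p x else q x).
Proof.
  intros Hp Hq Hm x0. apply continuity_pt_intro. intros eps Heps.
  destruct (continuity_pt_elim _ _ (Hp x0) eps Heps) as [d1 [Hd1 H1]].
  destruct (continuity_pt_elim _ _ (Hq x0) eps Heps) as [d2 [Hd2 H2]].
  destruct (Rtotal_order x0 m) as [Hlt|[<-|Hgt]].
  - exists (Rmin d1 (m - x0)). split; [apply Rmin_pos; lra|].
    intros y Hy. pose proof (Rmin_l d1 (m - x0)). pose proof (Rmin_r d1 (m - x0)).
    destruct (Rle_dec y m); destruct (Rle_dec x0 m); try lra.
    + apply H1. lra.
    + revert Hy; unfold Rabs; destruct Rcase_abs; lra.
  - exists (Rmin d1 d2). split; [apply Rmin_pos; lra|].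
    intros y Hy. pose proof (Rmin_l d1 d2). pose proof (Rmin_r d1 d2).
    destruct (Rle_dec x0 x0); [|lra].
    destruct (Rle_dec y x0); [apply H1; lra|]. rewrite Hm. apply H2; lra.
  - exists (Rmin d2 (x0 - m)). split; [apply Rmin_pos; lra|].
    intros y Hy. pose proof (Rmin_l d2 (x0 - m)). pose proof (Rmin_r d2 (x0 - m)).
    destruct (Rle_dec y m); destruct (Rle_dec x0 m); try lra.
    + revert Hy; unfold Rabs; destruct Rcase_abs; lra.
    + apply H2; lra.
Qed.

Lemma continuity_Rmin_r (M : R) : continuity (fun x => Rmin x M).
Proof.
  intro x. apply (continuity_pt_ext (fun x => (x + M - Rabs (x - M)) / 2)); [|reg].
  intro y. unfold Rmin, Rabs. destruct Rle_dec; destruct Rcase_abs; lra.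
Qed.

Definition clamp (lo hi x : R) : R := Rmax lo (Rmin hi x).

Lemma clamp_in (lo hi x : R) : lo <= hi -> lo <= clamp lo hi x <= hi.
Proof. intros. unfold clamp, Rmax, Rmin. repeat destruct Rle_dec; lra. Qed.

Lemma clamp_id (lo hi x : R) : lo <= x <= hi -> clamp lo hi x = x.
Proof. intros. unfold clamp, Rmax, Rmin. repeat destruct Rle_dec; lra. Qed.

Lemma clamp_lipschitz (lo hi x y : R) : lo <= hi ->
  Rabs (clamp lo hi y - clamp lo hi x) <= Rabs (y - x).
Proof.
  intros. unfold clamp, Rmax, Rmin.
  repeat destruct Rle_dec; unfold Rabs; repeat destruct Rcase_abs; lra.
Qed.

Lemma continuity_clamp (lo hi : R) : lo <= hi -> continuity (clamp lo hi).
Proof.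
  intros Hlo x. apply continuity_pt_intro. intros eps Heps. exists eps.
  split; [exact Heps|]. intros y Hy.
  eapply Rle_lt_trans; [apply clamp_lipschitz|]; assumption.
Qed.

(* Continuity of [f] on [[lo, hi]] is encoded as continuity on all of [R] of
   [f] precomposed with the retraction [clamp lo hi]; this makes the Stdlib
   calculus of [continuity_pt] available for functions on intervals. *)
Definition clamp_continuous (f : R -> R) (lo hi : R) : Prop :=
  continuity (fun x => f (clamp lo hi x)).

Lemma clamp_continuous_of_cont_on (f : R -> R) (lo hi : R) :
  lo <= hi -> cont_on f lo hi -> clamp_continuous f lo hi.
Proof.
  intros Hlo Hf x. apply continuity_pt_intro. intros eps Heps.
  destruct (Hf (clamp lo hi x) (clamp_in lo hi x Hlo) eps Heps) as [d [Hd Hy]].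
  exists d; split; [exact Hd|]. intros y Hyx. apply Hy; [now apply clamp_in|].
  eapply Rle_lt_trans; [apply clamp_lipschitz|]; assumption.
Qed.

Lemma clamp_continuous_of_continuity (f : R -> R) (lo hi : R) :
  lo <= hi -> continuity f -> clamp_continuous f lo hi.
Proof.
  intros Hlo Hf x. apply (continuity_pt_comp (clamp lo hi) f);
    [now apply continuity_clamp | apply Hf].
Qed.

Lemma clamp_continuous_ext (f g : R -> R) (lo hi : R) :
  lo <= hi -> (forall x, lo <= x <= hi -> f x = g x) ->
  clamp_continuous f lo hi -> clamp_continuous g lo hi.
Proof.
  intros Hlo Hfg Hf x. apply (continuity_pt_ext (fun x => f (clamp lo hi x))).
  - intro y. apply Hfg, clamp_in, Hlo.
  - apply Hf.
Qed.

Lemma clamp_continuous_sub (f : R -> R) (lo hi lo' hi' : R) :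
  lo <= lo' -> lo' <= hi' -> hi' <= hi ->
  clamp_continuous f lo hi -> clamp_continuous f lo' hi'.
Proof.
  intros H1 H2 H3 Hf x.
  apply (continuity_pt_ext (fun x => f (clamp lo hi (clamp lo' hi' x)))).
  - intro y. rewrite (clamp_id lo hi); [reflexivity|].
    pose proof (clamp_in lo' hi' y H2). lra.
  - apply (continuity_pt_comp (clamp lo' hi') (fun z => f (clamp lo hi z)));
      [now apply continuity_clamp | apply Hf].
Qed.

Lemma clamp_continuous_comp (f g : R -> R) (l1 h1 l2 h2 : R) :
  l1 <= h1 -> l2 <= h2 -> (forall x, l1 <= x <= h1 -> l2 <= f x <= h2) ->
  clamp_continuous f l1 h1 -> clamp_continuous g l2 h2 ->
  clamp_continuous (fun x => g (f x)) l1 h1.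
Proof.
  intros Hl1 Hl2 Hfx Hf Hg x.
  apply (continuity_pt_ext (fun x => g (clamp l2 h2 (f (clamp l1 h1 x))))).
  - intro y. rewrite clamp_id; [reflexivity|]. apply Hfx, clamp_in, Hl1.
  - apply (continuity_pt_comp (fun x => f (clamp l1 h1 x)) (fun z => g (clamp l2 h2 z)));
      [apply Hf | apply Hg].
Qed.

Lemma clamp_continuous_app (h f : R -> R) (lo hi : R) :
  lo <= hi -> (forall x, lo <= x <= hi -> continuity_pt h (f x)) ->
  clamp_continuous f lo hi -> clamp_continuous (fun x => h (f x)) lo hi.
Proof.
  intros Hlo Hh Hf x. apply (continuity_pt_comp (fun x => f (clamp lo hi x)) h);
    [apply Hf | apply Hh, clamp_in, Hlo].
Qed.

Section ClampAlgebra.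
Variables (f g : R -> R) (lo hi : R).
Hypotheses (Hf : clamp_continuous f lo hi) (Hg : clamp_continuous g lo hi).

Lemma clamp_continuous_plus : clamp_continuous (fun x => f x + g x) lo hi.
Proof.
  intro x.
  now apply (continuity_pt_plus (fun x => f (clamp lo hi x)) (fun x => g (clamp lo hi x))).
Qed.

Lemma clamp_continuous_minus : clamp_continuous (fun x => f x - g x) lo hi.
Proof.
  intro x.
  now apply (continuity_pt_minus (fun x => f (clamp lo hi x)) (fun x => g (clamp lo hi x))).
Qed.

Lemma clamp_continuous_mult : clamp_continuous (fun x => f x * g x) lo hi.
Proof.
  intro x.
  now apply (continuity_pt_mult (fun x => f (clamp lo hi x)) (fun x => g (clamp lo hi x))).
Qed.

Lemma clamp_continuous_div : lo <= hi -> (forall x, lo <= x <= hi -> g x <> 0) ->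
  clamp_continuous (fun x => f x / g x) lo hi.
Proof.
  intros Hlo Hg0 x.
  apply (continuity_pt_div (fun x => f (clamp lo hi x)) (fun x => g (clamp lo hi x))); auto.
  apply Hg0, clamp_in, Hlo.
Qed.

End ClampAlgebra.

Lemma clamp_continuous_const (k lo hi : R) : clamp_continuous (fun _ => k) lo hi.
Proof. intro x. reg. Qed.

Lemma clamp_continuous_id (lo hi : R) : lo <= hi -> clamp_continuous (fun x => x) lo hi.
Proof. intros Hlo x. now apply continuity_clamp. Qed.

Lemma clamp_continuous_glue (f : R -> R) (lo mid hi : R) : lo <= mid -> mid <= hi ->
  clamp_continuous f lo mid -> clamp_continuous f mid hi -> clamp_continuous f lo hi.
Proof.
  intros H1 H2 Hl Hr x.
  apply (continuity_pt_ext (fun x => if Rle_dec x mid then f (clamp lo mid x)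
                                      else f (clamp mid hi x))).
  - intro y. unfold clamp, Rmax, Rmin. repeat destruct Rle_dec; try (f_equal; lra).
  - apply continuity_if_Rle; auto.
    unfold clamp, Rmax, Rmin. repeat destruct Rle_dec; try (f_equal; lra).
Qed.

Lemma Int_part_unique (t : R) (k : Z) : IZR k <= t < IZR k + 1 -> Int_part t = k.
Proof. intros Hk. symmetry. apply Int_part_spec. lra. Qed.

Lemma Int_part_bounds (t : R) : IZR (Int_part t) <= t < IZR (Int_part t) + 1.
Proof. pose proof (base_Int_part t). lra. Qed.

Definition periodic_ext (B : R -> R) (K t : R) : R :=
  K * IZR (Int_part t) + B (t - IZR (Int_part t)).

Section PeriodicExtension.
Variables (B : R -> R) (K : R).
Hypothesis HB : B 1 = B 0 + K.

Lemma periodic_ext_local (t : R) (k : Z) : IZR k <= t <= IZR k + 1 ->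
  periodic_ext B K t = K * IZR k + B (t - IZR k).
Proof.
  intros Ht. unfold periodic_ext. destruct (Rlt_dec t (IZR k + 1)).
  - rewrite (Int_part_unique t k); [reflexivity|lra].
  - assert (Et : t = IZR (k + 1)) by (rewrite plus_IZR; simpl; lra).
    rewrite (Int_part_unique t (k + 1)) by (rewrite Et; lra).
    rewrite Et, plus_IZR. simpl.
    replace (IZR k + 1 - (IZR k + 1)) with 0 by ring.
    replace (IZR k + 1 - IZR k) with 1 by ring. rewrite HB. ring.
Qed.

Lemma periodic_ext_shift (t : R) : periodic_ext B K (t + 1) = periodic_ext B K t + K.
Proof.
  pose proof (Int_part_bounds t).
  rewrite (periodic_ext_local (t + 1) (Int_part t + 1)) by (rewrite plus_IZR; simpl; lra).
  unfold periodic_ext. rewrite plus_IZR. simpl.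
  replace (t + 1 - (IZR (Int_part t) + 1)) with (t - IZR (Int_part t)) by ring. ring.
Qed.

(* Near [t0], [periodic_ext B K] coincides with the gluing at [k] of its formulas
   on [[k - 1, k]] and [[k, k + 1]], where [k] is the integer part of [t0]. *)
Lemma continuity_periodic_ext : clamp_continuous B 0 1 -> continuity (periodic_ext B K).
Proof.
  intros HC t0. set (k := Int_part t0). pose proof (Int_part_bounds t0) as Hk. fold k in Hk.
  set (p := fun t => K * IZR (k - 1) + B (clamp 0 1 (t - IZR (k - 1)))).
  set (q := fun t => K * IZR k + B (clamp 0 1 (t - IZR k))).
  assert (Hp : continuity p).
  { intro x. apply continuity_pt_plus; [reg|].
    apply (continuity_pt_comp (fun t => t - IZR (k - 1)) (fun z => B (clamp 0 1 z)));
      [reg | apply HC]. }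
  assert (Hq : continuity q).
  { intro x. apply continuity_pt_plus; [reg|].
    apply (continuity_pt_comp (fun t => t - IZR k) (fun z => B (clamp 0 1 z)));
      [reg | apply HC]. }
  assert (Hpq : p (IZR k) = q (IZR k)).
  { unfold p, q. rewrite minus_IZR. simpl.
    replace (IZR k - (IZR k - 1)) with 1 by ring. replace (IZR k - IZR k) with 0 by ring.
    rewrite !clamp_id by lra. rewrite HB. ring. }
  apply (continuity_pt_locally_ext (fun t => if Rle_dec t (IZR k) then p t else q t) _
           (Rmin (t0 - (IZR k - 1)) (IZR k + 1 - t0)) t0).
  - apply Rmin_pos; lra.
  - intros y Hy. unfold Rdist in Hy.
    pose proof (Rmin_l (t0 - (IZR k - 1)) (IZR k + 1 - t0)).
    pose proof (Rmin_r (t0 - (IZR k - 1)) (IZR k + 1 - t0)).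
    assert (IZR k - 1 < y < IZR k + 1)
      by (revert Hy; unfold Rabs; destruct Rcase_abs; lra).
    destruct (Rle_dec y (IZR k)); unfold p, q; rewrite clamp_id.
    + rewrite (periodic_ext_local y (k - 1)); [reflexivity|rewrite minus_IZR; simpl; lra].
    + rewrite minus_IZR; simpl; lra.
    + rewrite (periodic_ext_local y k); [reflexivity|lra].
    + lra.
  - now apply continuity_if_Rle.
Qed.

End PeriodicExtension.

Lemma cos_period_Z (x : R) (k : Z) : cos (x + 2 * PI * IZR k) = cos x.
Proof.
  destruct (Z_le_gt_dec 0 k).
  - rewrite <- (Z2Nat.id k), <- INR_IZR_INZ, <- (cos_period x (Z.to_nat k)) by lia.
    f_equal. ring.
  - pose proof (cos_period (x + 2 * PI * IZR k) (Z.to_nat (- k))) as Hp.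
    rewrite INR_IZR_INZ, Z2Nat.id, opp_IZR in Hp by lia.
    rewrite <- Hp. f_equal. ring.
Qed.

Lemma sin_period_Z (x : R) (k : Z) : sin (x + 2 * PI * IZR k) = sin x.
Proof.
  destruct (Z_le_gt_dec 0 k).
  - rewrite <- (Z2Nat.id k), <- INR_IZR_INZ, <- (sin_period x (Z.to_nat k)) by lia.
    f_equal. ring.
  - pose proof (sin_period (x + 2 * PI * IZR k) (Z.to_nat (- k))) as Hp.
    rewrite INR_IZR_INZ, Z2Nat.id, opp_IZR in Hp by lia.
    rewrite <- Hp. f_equal. ring.
Qed.

Definition hypot (p q : R) : R := sqrt (p * p + q * q).

Lemma hypot_sq (p q : R) : hypot p q * hypot p q = p * p + q * q.
Proof. unfold hypot. apply sqrt_sqrt. nra. Qed.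

Lemma hypot_ge0 (p q : R) : 0 <= hypot p q.
Proof. apply sqrt_pos. Qed.

Lemma hypot_opp (p q : R) : hypot (- p) (- q) = hypot p q.
Proof. unfold hypot. f_equal. ring. Qed.

Lemma hypot_y0 (p : R) : 0 < p -> hypot p 0 = p.
Proof. intros Hp. unfold hypot. rewrite Rmult_0_r, Rplus_0_r. apply sqrt_square. lra. Qed.

Lemma hypot_add_pos (p q : R) : q <> 0 \/ 0 < p -> 0 < hypot p q + p.
Proof.
  intros H. pose proof (hypot_sq p q). pose proof (hypot_ge0 p q).
  destruct H as [Hq|Hp]; [|lra].
  assert (0 < q * q) by (apply Rsqr_pos_lt; exact Hq).
  destruct (Rle_dec 0 p); [nra|]. assert (hypot p q > - p) by nra. lra.
Qed.

Lemma hypot_sub_pos (p q : R) : q <> 0 \/ p < 0 -> 0 < hypot p q - p.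
Proof.
  intros H. pose proof (hypot_add_pos (- p) (- q)) as Hopp. rewrite hypot_opp in Hopp.
  apply Hopp. destruct H; [left|right]; lra.
Qed.

Lemma cos_2atan (u : R) : cos (2 * atan u) = (1 - u * u) / (1 + u * u).
Proof.
  assert (Hp : 0 < 1 + u * u) by nra.
  pose proof (sqrt_sqrt (1 + u * u) (Rlt_le _ _ Hp)). pose proof (sqrt_lt_R0 _ Hp).
  rewrite cos_2a, cos_atan, sin_atan. unfold Rsqr.
  field_simplify; [|lra..].
  replace (sqrt (1 + u * u) ^ 2) with (u ^ 2 + 1) by (simpl; lra). reflexivity.
Qed.

Lemma sin_2atan (u : R) : sin (2 * atan u) = 2 * u / (1 + u * u).
Proof.
  assert (Hp : 0 < 1 + u * u) by nra.
  pose proof (sqrt_sqrt (1 + u * u) (Rlt_le _ _ Hp)). pose proof (sqrt_lt_R0 _ Hp).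
  rewrite sin_2a, cos_atan, sin_atan. unfold Rsqr.
  field_simplify; [|lra..].
  replace (sqrt (1 + u * u) ^ 2) with (u ^ 2 + 1) by (simpl; lra). reflexivity.
Qed.

(* [0 < hypot p q + p] says that [(p, q)] is off the closed negative real axis. *)
Lemma polar_angle_half_tangent (p q : R) : 0 < hypot p q + p ->
  0 < hypot p q /\
  cos (2 * atan (q / (hypot p q + p))) = p / hypot p q /\
  sin (2 * atan (q / (hypot p q + p))) = q / hypot p q.
Proof.
  intros Hpos. pose proof (hypot_sq p q) as HN. pose proof (hypot_ge0 p q).
  set (N := hypot p q) in *.
  assert (HN0 : 0 < N).
  { destruct (Req_dec N 0) as [E|]; [|lra]. rewrite E in HN. nra. }
  set (u := q / (N + p)).
  assert (Hu : u * (N + p) = q) by (unfold u; field; lra).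
  assert (Hp : 0 < 1 + u * u) by nra.
  split; [exact HN0|]. rewrite cos_2atan, sin_2atan. split.
  - apply (Rmult_eq_reg_r ((1 + u * u) * N)); [|nra].
    field_simplify; try lra.
    assert (E : ((1 - u * u) * N - p * (1 + u * u)) * (N + p) = 0).
    { replace (((1 - u * u) * N - p * (1 + u * u)) * (N + p)) with
        (N * N - p * p - (u * (N + p)) * (u * (N + p))) by ring.
      rewrite Hu, HN. ring. }
    apply Rmult_integral in E. destruct E; lra.
  - apply (Rmult_eq_reg_r ((1 + u * u) * N)); [|nra].
    field_simplify; try lra.
    assert (E : (2 * u * N - q * (1 + u * u)) * (N + p) = 0).
    { replace ((2 * u * N - q * (1 + u * u)) * (N + p)) with
        (u * (N + p) * (N - p) + u * (N + p) * (N + p) - q * (N + p)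
         - q * (u * (N + p)) * u) by ring.
      rewrite Hu.
      replace (q * (N - p) + q * (N + p) - q * (N + p) - q * q * u)
        with (q * ((N - p) - q * u)) by ring.
      replace ((N - p) - q * u) with ((N * N - p * p - q * (u * (N + p))) / (N + p))
        by (field; lra).
      rewrite Hu, HN. field. lra. }
    apply Rmult_integral in E. destruct E; lra.
Qed.

Lemma atan_add_inv (u v : R) : u * v = 1 ->
  (0 < u -> atan u + atan v = PI / 2) /\ (u < 0 -> atan u + atan v = - (PI / 2)).
Proof.
  intros Huv. split; intros Hu.
  - replace v with (/ u) by (field_simplify_eq; lra). rewrite atan_inv; [ring|exact Hu].
  - replace v with (- / (- u)) by (field_simplify_eq; lra).
    rewrite atan_opp, atan_inv by lra. rewrite <- (Ropp_involutive u) at 1.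
    rewrite atan_opp. ring.
Qed.

Lemma cos_sin_add_sPI (s a : R) : s = 1 \/ s = -1 ->
  cos (s * PI + a) = - cos a /\ sin (s * PI + a) = - sin a.
Proof.
  intros [-> | ->].
  - rewrite Rmult_1_l, cos_plus, sin_plus, cos_PI, sin_PI. split; ring.
  - replace (-1 * PI) with (- PI) by ring.
    rewrite cos_plus, sin_plus, cos_neg, sin_neg, cos_PI, sin_PI. split; ring.
Qed.

Section SignedLoopLift.
Variables (X Y : R -> R) (s : R).
Hypothesis Hs : s = 1 \/ s = -1.
Hypotheses (HCX : clamp_continuous X (-1) 1) (HCY : clamp_continuous Y (-1) 1).
Hypotheses (HXm1 : 0 < X (-1)) (HYm1 : Y (-1) = 0).
Hypotheses (HX1 : 0 < X 1) (HY1 : Y 1 = 0).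
Hypothesis HX0 : X 0 < 0.
Hypothesis HYneg : forall t, -1 < t < 0 -> 0 < s * Y t.
Hypothesis HYpos : forall t, 0 < t < 1 -> s * Y t < 0.

Let N (t : R) := hypot (X t) (Y t).

(* The lift is glued from three half-tangent formulas: on [[-1, -1/2]] and
   [[1/2, 1]] the loop avoids the closed negative real axis, on [[-1/2, 1/2]]
   the closed positive one. *)
Let lift_left (t : R) := 2 * atan (Y t / (N t + X t)).
Let lift_mid (t : R) := s * PI - 2 * atan (Y t / (N t - X t)).
Let lift_right (t : R) := lift_left t + 2 * PI * s.
Let lift (t : R) :=
  if Rle_dec t (-1/2) then lift_left t
  else if Rle_dec t (1/2) then lift_mid t else lift_right t.

Lemma signed_loop_Y_neq0 (t : R) : -1 < t < 1 -> t <> 0 -> Y t <> 0.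
Proof.
  intros Ht Ht0 HY. destruct (Rlt_dec t 0).
  - pose proof (HYneg t ltac:(lra)). rewrite HY in *. lra.
  - pose proof (HYpos t ltac:(lra)). rewrite HY in *. lra.
Qed.

Lemma signed_loop_add_pos (t : R) : -1 <= t <= 1 -> t <> 0 -> 0 < N t + X t.
Proof.
  intros Ht Ht0. apply hypot_add_pos.
  destruct (Req_dec t (-1)) as [->|]; [now right|].
  destruct (Req_dec t 1) as [->|]; [now right|].
  left. apply signed_loop_Y_neq0; lra.
Qed.

Lemma signed_loop_sub_pos (t : R) : -1 < t < 1 -> 0 < N t - X t.
Proof.
  intros Ht. apply hypot_sub_pos.
  destruct (Req_dec t 0) as [->|]; [now right|].
  left. now apply signed_loop_Y_neq0.
Qed.

Lemma lift_junction (t : R) : -1 < t < 1 -> t <> 0 ->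
  lift_left t + (if Rlt_dec t 0 then 0 else 2 * PI * s) = lift_mid t.
Proof.
  intros Ht Ht0. unfold lift_left, lift_mid.
  assert (Huv : Y t / (N t + X t) * (Y t / (N t - X t)) = 1).
  { pose proof (signed_loop_add_pos t ltac:(lra) Ht0).
    pose proof (signed_loop_sub_pos t Ht). pose proof (hypot_sq (X t) (Y t)).
    pose proof (signed_loop_Y_neq0 t Ht Ht0) as HY0. fold (N t) in *.
    field_simplify; [|lra..].
    replace (N t ^ 2 - X t ^ 2) with (Y t * Y t) by (simpl; nra). field. exact HY0. }
  destruct (atan_add_inv _ _ Huv) as [Hp Hn].
  pose proof (signed_loop_add_pos t ltac:(lra) Ht0) as Hd.
  assert (Hsgn : forall d, 0 < d -> (0 < Y t -> 0 < Y t / d) /\ (Y t < 0 -> Y t / d < 0)).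
  { intros d Hd'. split; intro; [apply Rdiv_lt_0_compat; lra|].
    apply Rdiv_neg_pos; lra. }
  destruct (Hsgn _ Hd) as [Hs1 Hs2].
  destruct (Rlt_dec t 0) as [Hneg|Hnneg].
  - pose proof (HYneg t ltac:(lra)).
    destruct Hs as [-> | ->].
    + pose proof (Hp (Hs1 ltac:(lra))). lra.
    + pose proof (Hn (Hs2 ltac:(lra))). lra.
  - pose proof (HYpos t ltac:(lra)).
    destruct Hs as [-> | ->].
    + pose proof (Hn (Hs2 ltac:(lra))). lra.
    + pose proof (Hp (Hs1 ltac:(lra))). lra.
Qed.

Lemma clamp_continuous_N : clamp_continuous N (-1) 1.
Proof.
  apply (clamp_continuous_app sqrt (fun t => X t * X t + Y t * Y t)); [lra| |].
  - intros. apply continuity_pt_sqrt. nra.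
  - apply clamp_continuous_plus; now apply clamp_continuous_mult.
Qed.

Lemma clamp_continuous_atan_ratio (lo hi : R) (D : R -> R) :
  -1 <= lo <= hi -> hi <= 1 -> clamp_continuous D (-1) 1 ->
  (forall t, lo <= t <= hi -> 0 < D t) ->
  clamp_continuous (fun t => 2 * atan (Y t / D t)) lo hi.
Proof.
  intros Hlo Hhi HD HD0. apply clamp_continuous_mult; [apply clamp_continuous_const|].
  apply (clamp_continuous_app atan (fun t => Y t / D t)); [lra| |].
  - intros. apply derivable_continuous_pt, derivable_pt_atan.
  - apply clamp_continuous_div; [| |lra|].
    + apply (clamp_continuous_sub Y (-1) 1); auto; lra.
    + apply (clamp_continuous_sub D (-1) 1); auto; lra.
    + intros t Ht. specialize (HD0 t Ht). lra.
Qed.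

Lemma clamp_continuous_lift : clamp_continuous lift (-1) 1.
Proof.
  assert (HNp : clamp_continuous (fun t => N t + X t) (-1) 1)
    by (apply clamp_continuous_plus; [apply clamp_continuous_N|auto]).
  assert (HNm : clamp_continuous (fun t => N t - X t) (-1) 1)
    by (apply clamp_continuous_minus; [apply clamp_continuous_N|auto]).
  apply (clamp_continuous_glue _ (-1) (-1/2) 1); try lra.
  - apply (clamp_continuous_ext lift_left); [lra| |].
    + intros t Ht. unfold lift. destruct Rle_dec; [reflexivity|lra].
    + apply clamp_continuous_atan_ratio; auto; try lra.
      intros t Ht. apply signed_loop_add_pos; lra.
  - apply (clamp_continuous_glue _ (-1/2) (1/2) 1); try lra.
    + apply (clamp_continuous_ext lift_mid); [lra| |].
      * intros t Ht. unfold lift. destruct (Rle_dec t (-1/2)).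
        -- replace t with (-1/2) by lra. rewrite <- (lift_junction (-1/2)) by lra.
           destruct Rlt_dec; [ring|lra].
        -- destruct Rle_dec; [reflexivity|lra].
      * apply clamp_continuous_minus; [apply clamp_continuous_const|].
        apply clamp_continuous_atan_ratio; auto; try lra.
        intros t Ht. apply signed_loop_sub_pos; lra.
    + apply (clamp_continuous_ext lift_right); [lra| |].
      * intros t Ht. unfold lift. destruct (Rle_dec t (-1/2)); [lra|].
        destruct (Rle_dec t (1/2)); [|reflexivity].
        replace t with (1/2) by lra. rewrite <- (lift_junction (1/2)) by lra.
        destruct Rlt_dec; [lra|reflexivity].
      * apply clamp_continuous_plus; [|apply clamp_continuous_const].
        apply clamp_continuous_atan_ratio; auto; try lra.
        intros t Ht. apply signed_loop_add_pos; lra.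
Qed.

Lemma lift_cos_sin (t : R) : -1 <= t <= 1 ->
  cos (lift t) = X t / N t /\ sin (lift t) = Y t / N t.
Proof.
  intros Ht. unfold lift.
  destruct (Rle_dec t (-1/2)); [apply polar_angle_half_tangent, signed_loop_add_pos; lra|].
  destruct (Rle_dec t (1/2)).
  - pose proof (signed_loop_sub_pos t ltac:(lra)).
    destruct (polar_angle_half_tangent (- X t) (- Y t)) as [HN [Hc Hsn]].
    { rewrite hypot_opp. fold (N t). lra. }
    rewrite hypot_opp in HN, Hc, Hsn. fold (N t) in HN, Hc, Hsn.
    unfold lift_mid.
    replace (s * PI - 2 * atan (Y t / (N t - X t)))
      with (s * PI + 2 * atan (- Y t / (N t + - X t))).
    + destruct (cos_sin_add_sPI s (2 * atan (- Y t / (N t + - X t))) Hs) as [E1 E2].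
      rewrite E1, E2, Hc, Hsn. split; field; lra.
    + unfold Rdiv. rewrite Ropp_mult_distr_l_reverse, atan_opp.
      replace (N t + - X t) with (N t - X t) by ring. ring.
  - unfold lift_right. destruct Hs as [Es|Es]; rewrite Es.
    + replace 1 with (IZR 1) at 2 by reflexivity. rewrite cos_period_Z, sin_period_Z.
      apply polar_angle_half_tangent, signed_loop_add_pos; lra.
    + replace (-1) with (IZR (-1)) at 1 by reflexivity. rewrite cos_period_Z, sin_period_Z.
      apply polar_angle_half_tangent, signed_loop_add_pos; lra.
Qed.

Lemma signed_loop_lift : exists A : R -> R,
  clamp_continuous A (-1) 1 /\ A (-1) = 0 /\ A 1 = 2 * PI * s /\
  forall t, -1 <= t <= 1 ->
    cos (A t) = X t / hypot (X t) (Y t) /\ sin (A t) = Y t / hypot (X t) (Y t).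
Proof.
  exists lift. split; [exact clamp_continuous_lift|]. split; [|split].
  - unfold lift, lift_left. destruct Rle_dec; [|lra].
    rewrite HYm1. unfold Rdiv. rewrite Rmult_0_l, atan_0. ring.
  - unfold lift, lift_right, lift_left. do 2 (destruct Rle_dec; [lra|]).
    rewrite HY1. unfold Rdiv. rewrite Rmult_0_l, atan_0. ring.
  - exact lift_cos_sin.
Qed.

End SignedLoopLift.

Definition gmap (c : R -> R) (x : R) : R := x * c x.
Definition giter (c : R -> R) (n : nat) (x : R) : R := Nat.iter n (gmap c) x.

Fixpoint radial_drift (c : R -> R) (n : nat) (x : R) : R :=
  match n with
  | O => 0
  | S k => radial_drift c k x + (1 - 2 * giter c k x ^ 2)
  end.

Lemma giter_S (c : R -> R) (n : nat) (x : R) : giter c (S n) x = gmap c (giter c n x).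
Proof. reflexivity. Qed.

Section Dynamics.
Variable c : R -> R.
Hypothesis Hc1 : forall x, -1 <= x <= 1 -> (c x = 1 <-> (x = -1 \/ x = 0 \/ x = 1)).
Hypothesis Hmono : forall x y, -1 <= x <= 1 -> -1 <= y <= 1 -> x < y -> x * c x < y * c y.

Lemma gmap_m1 : gmap c (-1) = -1.
Proof. unfold gmap. rewrite (proj2 (Hc1 (-1) ltac:(lra))); [ring|now left]. Qed.

Lemma gmap_0 : gmap c 0 = 0.
Proof. unfold gmap. ring. Qed.

Lemma gmap_1 : gmap c 1 = 1.
Proof. unfold gmap. rewrite (proj2 (Hc1 1 ltac:(lra))); [ring|now do 2 right]. Qed.

Lemma gmap_le (x y : R) : -1 <= x <= 1 -> -1 <= y <= 1 -> x <= y -> gmap c x <= gmap c y.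
Proof.
  intros Hx Hy Hxy. destruct (Req_dec x y) as [->|]; [lra|].
  left. apply Hmono; auto; lra.
Qed.

Lemma gmap_lt (x y : R) : -1 <= x <= 1 -> -1 <= y <= 1 -> x < y -> gmap c x < gmap c y.
Proof. apply Hmono. Qed.

Lemma giter_m1 (n : nat) : giter c n (-1) = -1.
Proof. induction n; [reflexivity|]. now rewrite giter_S, IHn, gmap_m1. Qed.

Lemma giter_0 (n : nat) : giter c n 0 = 0.
Proof. induction n; [reflexivity|]. now rewrite giter_S, IHn, gmap_0. Qed.

Lemma giter_1 (n : nat) : giter c n 1 = 1.
Proof. induction n; [reflexivity|]. now rewrite giter_S, IHn, gmap_1. Qed.

Lemma giter_nonpos (n : nat) (x : R) : -1 <= x <= 0 -> -1 <= giter c n x <= 0.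
Proof.
  induction n; intros Hx; [exact Hx|]. specialize (IHn Hx).
  rewrite giter_S, <- gmap_m1, <- gmap_0. split; apply gmap_le; lra.
Qed.

Lemma giter_nonneg (n : nat) (x : R) : 0 <= x <= 1 -> 0 <= giter c n x <= 1.
Proof.
  induction n; intros Hx; [exact Hx|]. specialize (IHn Hx).
  rewrite giter_S, <- gmap_1, <- gmap_0. split; apply gmap_le; lra.
Qed.

Lemma giter_range (n : nat) (x : R) : -1 <= x <= 1 -> -1 <= giter c n x <= 1.
Proof.
  intros Hx. destruct (Rle_dec x 0).
  - pose proof (giter_nonpos n x ltac:(lra)). lra.
  - pose proof (giter_nonneg n x ltac:(lra)). lra.
Qed.

Lemma giter_sub_range (n : nat) (x : R) : -1 <= x <= 1 -> -1 <= giter c n x - x <= 1.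
Proof.
  intros Hx. destruct (Rle_dec x 0).
  - pose proof (giter_nonpos n x ltac:(lra)). lra.
  - pose proof (giter_nonneg n x ltac:(lra)). lra.
Qed.

Lemma radial_drift_m1 (n : nat) : radial_drift c n (-1) = - INR n.
Proof. induction n; [simpl; ring|]. simpl radial_drift. rewrite IHn, giter_m1, S_INR. ring. Qed.

Lemma radial_drift_0 (n : nat) : radial_drift c n 0 = INR n.
Proof. induction n; [simpl; ring|]. simpl radial_drift. rewrite IHn, giter_0, S_INR. ring. Qed.

Lemma radial_drift_1 (n : nat) : radial_drift c n 1 = - INR n.
Proof. induction n; [simpl; ring|]. simpl radial_drift. rewrite IHn, giter_1, S_INR. ring. Qed.

(* Orbits of the increasing map [gmap c] are monotone, so the sign of
   [giter c n x - x] is that of [gmap c x - x]. *)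
Lemma giter_sub_sign (k : nat) (u x : R) : -1 <= x <= 1 ->
  0 < u * (gmap c x - x) -> 0 < u * (giter c (S k) x - x).
Proof.
  intros Hx Hu.
  assert (Hstep : forall j, 0 < u * (giter c (S j) x - giter c j x)).
  { induction j; [exact Hu|].
    pose proof (giter_range j x Hx). pose proof (giter_range (S j) x Hx).
    rewrite (giter_S c (S j)).
    set (y0 := giter c j x) in *. set (y1 := giter c (S j) x) in *.
    assert (Hy1 : y1 = gmap c y0) by reflexivity. clearbody y0 y1.
    destruct (Rlt_dec 0 u).
    - assert (Hlt : y0 < y1) by nra.
      pose proof (gmap_lt y0 y1 ltac:(lra) ltac:(lra) Hlt). nra.
    - assert (Hlt : y1 < y0) by nra.
      pose proof (gmap_lt y1 y0 ltac:(lra) ltac:(lra) Hlt). nra. }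
  induction k; [exact (Hstep O)|]. pose proof (Hstep (S k)). nra.
Qed.

Lemma giter_fixed_point (n : nat) (x : R) : (1 <= n)%nat -> -1 <= x <= 1 ->
  giter c n x = x -> x = -1 \/ x = 0 \/ x = 1.
Proof.
  intros Hn Hx Hfix. destruct n as [|k]; [lia|].
  destruct (Rtotal_order (gmap c x) x) as [H|[H|H]].
  - pose proof (giter_sub_sign k (-1) x Hx ltac:(lra)). lra.
  - destruct (Req_dec x 0) as [|Hx0]; [now right; left|].
    apply Hc1; [exact Hx|]. unfold gmap in H.
    apply (Rmult_eq_reg_l x); [lra|exact Hx0].
  - pose proof (giter_sub_sign k 1 x Hx ltac:(lra)). lra.
Qed.

Hypothesis HC : clamp_continuous c (-1) 1.

Lemma clamp_continuous_giter (n : nat) : clamp_continuous (giter c n) (-1) 1.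
Proof.
  induction n.
  - apply clamp_continuous_id. lra.
  - apply (clamp_continuous_comp (giter c n) (gmap c) (-1) 1 (-1) 1); try lra; auto.
    + intros. now apply giter_range.
    + apply clamp_continuous_mult; [apply clamp_continuous_id; lra | exact HC].
Qed.

Lemma clamp_continuous_radial_drift (n : nat) : clamp_continuous (radial_drift c n) (-1) 1.
Proof.
  induction n; [exact (clamp_continuous_const 0 (-1) 1)|].
  change (clamp_continuous (fun x => radial_drift c n x + (1 - 2 * giter c n x ^ 2)) (-1) 1).
  apply clamp_continuous_plus; [exact IHn|].
  apply clamp_continuous_minus; [apply clamp_continuous_const|].
  apply clamp_continuous_mult; [apply clamp_continuous_const|].
  simpl. apply clamp_continuous_mult; [apply clamp_continuous_giter|].
  apply clamp_continuous_mult; [apply clamp_continuous_giter|apply clamp_continuous_const].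
Qed.

End Dynamics.

Lemma polar_period_Z (th r : R) (k : Z) : polar (th + 2 * PI * IZR k) r = polar th r.
Proof. unfold polar. now rewrite cos_period_Z, sin_period_Z. Qed.

Lemma vnorm_origin : vnorm origin = 0.
Proof. unfold vnorm, origin. simpl. rewrite Rmult_0_l, Rplus_0_l. apply sqrt_0. Qed.

Lemma vsub_polar (th r D S : R) :
  vsub (polar th r) (polar (th + D) (r + S)) =
  (exp r * (cos th * (1 - exp S * cos D) - sin th * (- exp S * sin D)),
   exp r * (sin th * (1 - exp S * cos D) + cos th * (- exp S * sin D))).
Proof.
  unfold vsub, polar. simpl. rewrite exp_plus, cos_plus, sin_plus. f_equal; ring.
Qed.

Lemma vnorm_vsub_polar (th r D S : R) :
  vnorm (vsub (polar th r) (polar (th + D) (r + S))) =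
  exp r * hypot (1 - exp S * cos D) (- exp S * sin D).
Proof.
  rewrite vsub_polar. unfold vnorm, hypot. simpl.
  set (X := 1 - exp S * cos D). set (Y := - exp S * sin D).
  pose proof (sin2_cos2 th) as Hth. unfold Rsqr in Hth.
  replace ((exp r * (cos th * X - sin th * Y)) * (exp r * (cos th * X - sin th * Y)) +
           (exp r * (sin th * X + cos th * Y)) * (exp r * (sin th * X + cos th * Y)))
    with ((exp r * exp r) * (X * X + Y * Y))
    by (transitivity ((exp r * exp r) * (X * X + Y * Y) * (sin th * sin th + cos th * cos th));
        [rewrite Hth; ring | ring]).
  pose proof (exp_pos r).
  rewrite sqrt_mult_alt by nra. rewrite sqrt_square by lra. reflexivity.
Qed.

Lemma direction_vsub_polar (th r D S A : R) :
  let X := 1 - exp S * cos D in let Y := - exp S * sin D in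
  0 < hypot X Y -> cos A = X / hypot X Y -> sin A = Y / hypot X Y ->
  let v := vsub (polar th r) (polar (th + D) (r + S)) in
  vscal (/ vnorm v) v = (cos (th + A), sin (th + A)).
Proof.
  intros X Y HN Hc Hs v. unfold v. rewrite vnorm_vsub_polar, vsub_polar. fold X Y.
  unfold vscal. simpl. pose proof (exp_pos r).
  rewrite cos_plus, sin_plus, Hc, Hs. f_equal; field; lra.
Qed.

Lemma polar_surjective (x : pt) : x <> origin -> exists th r, x = polar th r.
Proof.
  destruct x as [p q]. intros Hx. unfold origin in Hx.
  pose proof (hypot_sq p q) as Hsq. pose proof (hypot_ge0 p q).
  assert (HN : 0 < hypot p q).
  { destruct (Req_dec (hypot p q) 0) as [E|]; [|lra]. rewrite E in Hsq.
    assert (p = 0) by nra. assert (q = 0) by nra. subst. congruence. }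
  exists (if Rlt_dec 0 (hypot p q + p) then 2 * atan (q / (hypot p q + p)) else PI).
  exists (ln (hypot p q)). unfold polar. rewrite exp_ln by exact HN.
  destruct Rlt_dec as [Hpos|Hneg].
  - destruct (polar_angle_half_tangent p q Hpos) as [_ [Hc Hs]].
    rewrite Hc, Hs. f_equal; field; lra.
  - assert (E : (hypot p q + p) * (hypot p q - p) = q * q) by nra.
    assert (Hp : p = - hypot p q) by nra.
    assert (q = 0) by (rewrite Hp in E; nra).
    rewrite cos_PI, sin_PI. f_equal; lra.
Qed.

Lemma angle_reduce (a th : R) :
  exists th0 k, a <= th0 < a + 2 * PI /\ th = th0 + 2 * PI * IZR k.
Proof.
  pose proof PI_RGT_0. set (k := Int_part ((th - a) / (2 * PI))).
  pose proof (Int_part_bounds ((th - a) / (2 * PI))) as [H1 H2]. fold k in H1, H2.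
  exists (th - 2 * PI * IZR k), k. split; [|ring].
  apply (Rmult_le_compat_r (2 * PI)) in H1; [|lra].
  apply (Rmult_lt_compat_r (2 * PI)) in H2; [|lra].
  replace ((th - a) / (2 * PI) * (2 * PI)) with (th - a) in H1, H2 by (field; lra).
  lra.
Qed.

Lemma nat_piece_index (m : nat) (t : R) : (1 <= m)%nat -> 0 <= t <= INR m ->
  exists i, (1 <= i <= m)%nat /\ INR i - 1 <= t <= INR i.
Proof.
  induction m as [|m IH]; intros Hm Ht; [lia|].
  destruct (Rle_dec t (INR m)).
  - destruct m as [|m]; [exists 1%nat; simpl in *; split; [lia|lra]|].
    destruct (IH ltac:(lia) ltac:(lra)) as [i [Hi Hti]]. exists i. split; [lia|exact Hti].
  - exists (S m). rewrite S_INR in *. split; [lia|lra].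
Qed.

Lemma angle_off_interval (a b th : R) : b < th < a + 2 * PI ->
  forall k : Z, ~ (a <= th + 2 * PI * IZR k <= b).
Proof.
  intros Hth k Hk. pose proof PI_RGT_0.
  destruct (Z_lt_le_dec k 0) as [Hk0|Hk0].
  - assert (IZR k <= -1) by (apply IZR_le; lia). nra.
  - destruct (Z.eq_dec k 0) as [->|]; [simpl in Hk; lra|].
    assert (1 <= IZR k) by (apply IZR_le; lia). nra.
Qed.

Section IterateF.
Variables (m : nat) (c : R -> R) (a b : R) (F : pt -> pt).
Hypothesis Hm : (1 <= m)%nat.
Hypothesis Hab : 0 < b - a < 2 * PI.
Hypothesis HF : is_F a b m c F.
Hypothesis Hc1 : forall x, -1 <= x <= 1 -> (c x = 1 <-> (x = -1 \/ x = 0 \/ x = 1)).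
Hypothesis Hmono : forall x y, -1 <= x <= 1 -> -1 <= y <= 1 -> x < y -> x * c x < y * c y.

Definition width : R := (b - a) / INR m.

Lemma INR_m_pos : 0 < INR m.
Proof. apply lt_0_INR. lia. Qed.

Lemma width_pos : 0 < width.
Proof. apply Rdiv_lt_0_compat; [lra|exact INR_m_pos]. Qed.

Lemma width_lt_2PI : width < 2 * PI.
Proof.
  pose proof (le_INR 1 m Hm) as H1. simpl in H1. pose proof INR_m_pos.
  unfold width. apply (Rmult_lt_reg_r (INR m)); [lra|].
  unfold Rdiv. rewrite Rmult_assoc, Rinv_l by lra. nra.
Qed.

Lemma INR_m_width : INR m * width = b - a.
Proof. unfold width. field. pose proof INR_m_pos. lra. Qed.

Lemma apt_eq (j : nat) : apt a b m j = a + INR j * width.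
Proof. unfold apt, width. field. pose proof INR_m_pos. lra. Qed.

Lemma apt_pred (i : nat) : (1 <= i)%nat -> apt a b m (i - 1) = a + (INR i - 1) * width.
Proof. intros Hi. rewrite apt_eq, minus_INR by lia. reflexivity. Qed.

Lemma phi_eq (i : nat) (th : R) : (1 <= i)%nat ->
  phi a b m i th = 2 * ((th - a) / width) - 2 * INR i + 1.
Proof.
  intros Hi. unfold phi. rewrite (apt_eq i), apt_pred by exact Hi.
  field. pose proof width_pos. lra.
Qed.

Lemma phi_inv_eq (i : nat) (s : R) : (1 <= i)%nat ->
  phi_inv a b m i s = a + (INR i - 1) * width + (s + 1) * width / 2.
Proof. intros Hi. unfold phi_inv. rewrite (apt_eq i), apt_pred by exact Hi. field. Qed.

Lemma angle_scaled (th : R) : th = a + (th - a) / width * width.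
Proof. field. pose proof width_pos. lra. Qed.

Lemma phi_range (i : nat) (th : R) : (1 <= i)%nat ->
  apt a b m (i - 1) <= th <= apt a b m i -> -1 <= phi a b m i th <= 1.
Proof.
  intros Hi Hth. rewrite phi_eq by exact Hi. rewrite (apt_eq i), apt_pred in Hth by exact Hi.
  pose proof width_pos. pose proof (angle_scaled th) as Eth.
  set (t := (th - a) / width) in *. split; nra.
Qed.

Lemma phi_inv_range (i : nat) (s : R) : (1 <= i)%nat -> -1 <= s <= 1 ->
  apt a b m (i - 1) <= phi_inv a b m i s <= apt a b m i.
Proof.
  intros Hi Hs. rewrite phi_inv_eq, (apt_eq i), apt_pred by exact Hi.
  pose proof width_pos. split; nra.
Qed.

Lemma phi_phi_inv (i : nat) (s : R) : (1 <= i)%nat -> phi a b m i (phi_inv a b m i s) = s.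
Proof. intros Hi. rewrite phi_eq, phi_inv_eq by exact Hi. field. pose proof width_pos; lra. Qed.

Lemma iter_F_on_piece (i : nat) (th r : R) (n : nat) : (1 <= i <= m)%nat ->
  apt a b m (i - 1) <= th <= apt a b m i ->
  let s := phi a b m i th in
  Nat.iter n F (polar th r) =
  polar (th + (giter c n s - s) * width / 2) (r + radial_drift c n s).
Proof.
  intros Hi Hth s. destruct HF as [_ [Hpiece _]].
  pose proof (phi_range i th ltac:(lia) Hth) as Hs. fold s in Hs.
  assert (Hiter : forall k, Nat.iter k F (polar th r) =
                    polar (phi_inv a b m i (giter c k s)) (r + radial_drift c k s)).
  { induction k as [|k IH].
    - simpl. unfold s. rewrite phi_inv_eq, phi_eq by lia. f_equal; [|ring].
      field. pose proof width_pos. lra.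
    - change (Nat.iter (S k) F (polar th r)) with (F (Nat.iter k F (polar th r))).
      pose proof (giter_range c Hc1 Hmono k s Hs).
      rewrite IH, (Hpiece i) by (auto; apply phi_inv_range; auto; lia).
      rewrite phi_phi_inv by lia. simpl radial_drift. f_equal. ring. }
  rewrite Hiter. f_equal. unfold s. rewrite phi_inv_eq, phi_eq by lia.
  field. pose proof width_pos. lra.
Qed.

Lemma iter_F_off (th r : R) (n : nat) : (forall k : Z, ~ (a <= th + 2 * PI * IZR k <= b)) ->
  Nat.iter n F (polar th r) = polar th (r - INR n).
Proof.
  intros Hk. destruct HF as [_ [_ Hoff]]. induction n as [|n IH].
  - simpl. f_equal. ring.
  - change (Nat.iter (S n) F (polar th r)) with (F (Nat.iter n F (polar th r))).
    rewrite IH, Hoff by exact Hk. rewrite S_INR. f_equal. ring.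
Qed.

Lemma iter_F_origin (n : nat) : Nat.iter n F origin = origin.
Proof. destruct HF as [H0 _]. induction n; [reflexivity|]. simpl. now rewrite IHn. Qed.

Lemma angle_in_piece (th : R) : a <= th <= b ->
  exists i, (1 <= i <= m)%nat /\ apt a b m (i - 1) <= th <= apt a b m i /\
    INR i - 1 <= (th - a) / width <= INR i.
Proof.
  intros Hth. pose proof width_pos. pose proof INR_m_width.
  pose proof (angle_scaled th) as Eth. set (t := (th - a) / width) in *.
  destruct (nat_piece_index m t Hm ltac:(split; nra)) as [i [Hi Hti]].
  exists i. split; [exact Hi|split; [|exact Hti]].
  rewrite apt_pred, apt_eq by lia. split; nra.
Qed.

End IterateF.

Lemma sin_same_sign (u D : R) : -PI < D < PI -> 0 < u * D -> 0 < u * sin D.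
Proof.
  intros HD Hu. destruct (Rlt_dec 0 D) as [Hpos|Hnpos].
  - assert (0 < sin D) by (apply sin_gt_0; lra). nra.
  - assert (Hneg : D < 0).
    { destruct (Req_dec D 0) as [->|]; [rewrite Rmult_0_r in Hu|]; lra. }
    assert (Hsin : 0 < sin (- D)) by (apply sin_gt_0; lra). rewrite sin_neg in Hsin. nra.
Qed.

Lemma sin_eq_0_small (D : R) : -PI < D < PI -> sin D = 0 -> D = 0.
Proof.
  intros HD Hs. destruct (Rtotal_order D 0) as [H|[H|H]]; [|exact H|].
  - pose proof (sin_same_sign (-1) D HD ltac:(lra)). lra.
  - pose proof (sin_same_sign 1 D HD ltac:(lra)). lra.
Qed.

Section FixedPointIndex.
Variables (m : nat) (c : R -> R) (a b : R) (F : pt -> pt) (n : nat).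
Hypothesis Hm : (1 <= m)%nat.
Hypothesis Hn : (1 <= n)%nat.
Hypothesis Hab : 0 < b - a < 2 * PI.
Hypothesis HF : is_F a b m c F.
Hypothesis Hc1 : forall x, -1 <= x <= 1 -> (c x = 1 <-> (x = -1 \/ x = 0 \/ x = 1)).
Hypothesis Hmono : forall x y, -1 <= x <= 1 -> -1 <= y <= 1 -> x < y -> x * c x < y * c y.

(* On a piece, in the normalized coordinate [s], [F^n] turns by
   [angular_shift s] and moves radially by [radial_drift c n s]; the direction
   of [x - F^n x], rotated back by the angle of [x], is that of
   [(WX s, WY s)]. *)
Definition angular_shift (s : R) : R := (giter c n s - s) * width m a b / 2.
Definition WX (s : R) : R := 1 - exp (radial_drift c n s) * cos (angular_shift s).
Definition WY (s : R) : R := - exp (radial_drift c n s) * sin (angular_shift s).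

Lemma angular_shift_bound (s : R) : -1 <= s <= 1 -> -PI < angular_shift s < PI.
Proof.
  intros Hs. pose proof (giter_sub_range c Hc1 Hmono n s Hs).
  pose proof (width_pos m a b Hm Hab). pose proof (width_lt_2PI m a b Hm Hab).
  unfold angular_shift. split; nra.
Qed.

Lemma angular_shift_fixed (s : R) : s = -1 \/ s = 0 \/ s = 1 -> angular_shift s = 0.
Proof.
  intros [->|[->| ->]]; unfold angular_shift;
    [rewrite giter_m1|rewrite giter_0|rewrite giter_1]; auto; lra.
Qed.

Lemma exp_neg_INR_lt_1 : exp (- INR n) < 1.
Proof.
  rewrite <- exp_0. apply exp_increasing.
  pose proof (le_INR 1 n Hn). simpl in H. lra.
Qed.

Lemma WX_m1 : 0 < WX (-1).
Proof.
  unfold WX. rewrite angular_shift_fixed, cos_0, radial_drift_m1 by auto.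
  pose proof exp_neg_INR_lt_1. lra.
Qed.

Lemma WX_1 : 0 < WX 1.
Proof.
  unfold WX. rewrite angular_shift_fixed, cos_0, radial_drift_1 by auto.
  pose proof exp_neg_INR_lt_1. lra.
Qed.

Lemma WX_0 : WX 0 < 0.
Proof.
  unfold WX. rewrite angular_shift_fixed, cos_0, radial_drift_0 by auto.
  assert (1 < exp (INR n)).
  { rewrite <- exp_0. apply exp_increasing. pose proof (le_INR 1 n Hn). simpl in H. lra. }
  lra.
Qed.

Lemma WY_fixed (s : R) : s = -1 \/ s = 0 \/ s = 1 -> WY s = 0.
Proof. intros Hs. unfold WY. rewrite angular_shift_fixed, sin_0 by exact Hs. ring. Qed.

(* [x - F^n x] vanishes only at fixed points of [giter c n], i.e. at
   [s = -1, 0, 1], where the radial drift [-n, n, -n] is nonzero. *)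
Lemma hypot_W_pos (s : R) : -1 <= s <= 1 -> 0 < hypot (WX s) (WY s).
Proof.
  intros Hs. pose proof (hypot_sq (WX s) (WY s)). pose proof (hypot_ge0 (WX s) (WY s)).
  destruct (Req_dec (hypot (WX s) (WY s)) 0) as [E|E]; [|lra].
  rewrite E in H. assert (HY : WY s = 0) by nra. assert (HX : WX s = 0) by nra.
  unfold WY in HY. pose proof (exp_pos (radial_drift c n s)).
  assert (Hsin : sin (angular_shift s) = 0) by nra.
  apply sin_eq_0_small in Hsin; [|now apply angular_shift_bound].
  assert (Hfix : giter c n s = s).
  { unfold angular_shift in Hsin. pose proof (width_pos m a b Hm Hab). nra. }
  destruct (giter_fixed_point c Hc1 Hmono n s Hn Hs Hfix) as [->|[->| ->]].
  - pose proof WX_m1. lra.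
  - pose proof WX_0. lra.
  - pose proof WX_1. lra.
Qed.

Lemma hypot_off_interval :
  hypot (1 - exp (- INR n) * cos 0) (- exp (- INR n) * sin 0) = 1 - exp (- INR n).
Proof.
  rewrite cos_0, sin_0, Rmult_1_r, Rmult_0_r. apply hypot_y0.
  pose proof exp_neg_INR_lt_1. lra.
Qed.

Lemma vnorm_iter_F_pos (th r : R) : a <= th < a + 2 * PI ->
  0 < vnorm (vsub (polar th r) (Nat.iter n F (polar th r))).
Proof.
  intros Hth. pose proof (exp_pos r). destruct (Rle_dec th b).
  - destruct (angle_in_piece m a b Hm Hab th ltac:(lra)) as [i [Hi [Hpc _]]].
    rewrite (iter_F_on_piece m c a b F Hm Hab HF Hc1 Hmono i) by auto.
    rewrite vnorm_vsub_polar. apply Rmult_lt_0_compat; [exact H|].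
    apply hypot_W_pos, (phi_range m a b Hm Hab); auto; lia.
  - rewrite (iter_F_off m c a b F HF) by (apply (angle_off_interval a b); lra).
    replace (polar th (r - INR n)) with (polar (th + 0) (r + - INR n)) by (f_equal; ring).
    rewrite vnorm_vsub_polar, hypot_off_interval.
    pose proof exp_neg_INR_lt_1. apply Rmult_lt_0_compat; lra.
Qed.

Lemma iter_F_no_fixed_point (x : pt) : 0 < vnorm x -> Nat.iter n F x <> x.
Proof.
  intros Hx Hfix. assert (Hx0 : x <> origin) by (intros ->; rewrite vnorm_origin in Hx; lra).
  destruct (polar_surjective x Hx0) as [th [r ->]].
  destruct (angle_reduce a th) as [th0 [k [Hth0 ->]]]. rewrite polar_period_Z in Hfix.
  pose proof (vnorm_iter_F_pos th0 r Hth0) as Hpos. rewrite Hfix in Hpos.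
  unfold vsub, vnorm in Hpos. simpl in Hpos.
  rewrite !Rminus_diag, Rmult_0_l, Rplus_0_l, sqrt_0 in Hpos. lra.
Qed.

Lemma iter_F_isolated : isolated_fixed_point (Nat.iter n F).
Proof.
  split; [exact (iter_F_origin m c a b F HF n)|]. exists 1. split; [lra|].
  intros x Hx. apply iter_F_no_fixed_point. lra.
Qed.

(* [sg = -1] in case (1), where [c < 1] away from [-1, 0, 1]; [sg = 1] in case (2). *)
Variable sg : Z.
Hypothesis Hsg : sg = 1%Z \/ sg = (-1)%Z.
Hypothesis Hrot : forall x, -1 < x < 1 -> x <> 0 -> 0 < IZR sg * (c x - 1).
Hypothesis HC : clamp_continuous c (-1) 1.

Lemma WY_sign (t : R) : -1 < t < 1 -> t <> 0 -> IZR sg * t * WY t < 0.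
Proof.
  intros Ht Ht0. destruct n as [|k] eqn:En; [lia|].
  set (u := IZR sg * t).
  assert (Hg : 0 < u * (gmap c t - t)).
  { pose proof (Hrot t Ht Ht0). assert (0 < t * t) by (apply Rsqr_pos_lt; exact Ht0).
    unfold u, gmap. replace (IZR sg * t * (t * c t - t)) with (IZR sg * (c t - 1) * (t * t))
      by ring. nra. }
  pose proof (giter_sub_sign c Hc1 Hmono k u t ltac:(lra) Hg) as Hk.
  pose proof (angular_shift_bound t ltac:(lra)) as HD. pose proof (width_pos m a b Hm Hab).
  assert (HuD : 0 < u * angular_shift t).
  { unfold angular_shift. rewrite En. nra. }
  pose proof (sin_same_sign u _ HD HuD). pose proof (exp_pos (radial_drift c n t)).
  unfold WY. fold u. nra.
Qed.

Lemma clamp_continuous_angular_shift : clamp_continuous angular_shift (-1) 1.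
Proof.
  apply clamp_continuous_mult; [|apply clamp_continuous_const].
  apply clamp_continuous_mult; [|apply clamp_continuous_const].
  apply clamp_continuous_minus; [now apply clamp_continuous_giter|].
  apply clamp_continuous_id. lra.
Qed.

Lemma clamp_continuous_WX : clamp_continuous WX (-1) 1.
Proof.
  apply clamp_continuous_minus; [apply clamp_continuous_const|].
  apply clamp_continuous_mult.
  - apply clamp_continuous_app; [lra| |now apply clamp_continuous_radial_drift].
    intros. apply derivable_continuous_pt, derivable_pt_exp.
  - apply clamp_continuous_app; [lra| |exact clamp_continuous_angular_shift].
    intros. apply continuity_cos.
Qed.

Lemma clamp_continuous_WY : clamp_continuous WY (-1) 1.
Proof.
  apply clamp_continuous_mult.
  - apply (clamp_continuous_app (fun z => - exp z)); [lra|intros; reg|].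
    now apply clamp_continuous_radial_drift.
  - apply clamp_continuous_app; [lra| |exact clamp_continuous_angular_shift].
    intros. apply continuity_sin.
Qed.

Lemma W_lift : exists A : R -> R,
  clamp_continuous A (-1) 1 /\ A (-1) = 0 /\ A 1 = 2 * PI * IZR sg /\
  forall t, -1 <= t <= 1 ->
    cos (A t) = WX t / hypot (WX t) (WY t) /\ sin (A t) = WY t / hypot (WX t) (WY t).
Proof.
  apply signed_loop_lift.
  - destruct Hsg as [-> | ->]; [now left|now right].
  - exact clamp_continuous_WX.
  - exact clamp_continuous_WY.
  - exact WX_m1.
  - apply WY_fixed. now left.
  - exact WX_1.
  - apply WY_fixed. now do 2 right.
  - exact WX_0.
  - intros t Ht. pose proof (WY_sign t ltac:(lra) ltac:(lra)). nra.
  - intros t Ht. pose proof (WY_sign t ltac:(lra) ltac:(lra)). nra.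
Qed.


Section DirectionLift.
Variable A : R -> R.
Hypothesis HA : clamp_continuous A (-1) 1.
Hypothesis HA_m1 : A (-1) = 0.
Hypothesis HA_1 : A 1 = 2 * PI * IZR sg.
Hypothesis HA_dir : forall t, -1 <= t <= 1 ->
  cos (A t) = WX t / hypot (WX t) (WY t) /\ sin (A t) = WY t / hypot (WX t) (WY t).

(* Total turning of [W] after [t] pieces: one signed turn per piece. *)
Definition cumulative_turn : R -> R := periodic_ext (fun v => A (2 * v - 1)) (2 * PI * IZR sg).

Lemma cumulative_turn_period : A (2 * 1 - 1) = A (2 * 0 - 1) + 2 * PI * IZR sg.
Proof.
  replace (2 * 1 - 1) with 1 by ring. replace (2 * 0 - 1) with (-1) by ring.
  rewrite HA_1, HA_m1. ring.
Qed.

Lemma cumulative_turn_local (k : Z) (t : R) : IZR k <= t <= IZR k + 1 ->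
  cumulative_turn t = 2 * PI * IZR sg * IZR k + A (2 * (t - IZR k) - 1).
Proof.
  intros Ht. unfold cumulative_turn.
  now rewrite (periodic_ext_local _ _ cumulative_turn_period t k Ht).
Qed.

Lemma continuity_cumulative_turn : continuity cumulative_turn.
Proof.
  apply continuity_periodic_ext; [exact cumulative_turn_period|].
  apply (clamp_continuous_comp (fun v => 2 * v - 1) A 0 1 (-1) 1); [lra|lra| | |exact HA].
  - intros x Hx. lra.
  - intro x. reg. apply continuity_clamp. lra.
Qed.

Lemma cumulative_turn_nat (k : nat) : cumulative_turn (INR k) = 2 * PI * IZR sg * INR k.
Proof.
  rewrite INR_IZR_INZ, (cumulative_turn_local (Z.of_nat k)) by lra.
  replace (2 * (IZR (Z.of_nat k) - IZR (Z.of_nat k)) - 1) with (-1) by ring.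
  rewrite HA_m1. ring.
Qed.

Definition direction_angle (th : R) : R :=
  th + cumulative_turn (Rmin ((th - a) / width m a b) (INR m)).

Lemma continuity_direction_angle : continuity direction_angle.
Proof.
  intro x. apply continuity_pt_plus; [reg|].
  apply (continuity_pt_comp (fun th => Rmin ((th - a) / width m a b) (INR m)) cumulative_turn);
    [|apply continuity_cumulative_turn].
  apply (continuity_pt_comp (fun th => (th - a) / width m a b) (fun t => Rmin t (INR m)));
    [pose proof (width_pos m a b Hm Hab); reg | apply continuity_Rmin_r].
Qed.

Lemma direction_angle_start : direction_angle a = a.
Proof.
  unfold direction_angle. replace ((a - a) / width m a b) with (INR 0) by (simpl; field;
    pose proof (width_pos m a b Hm Hab); lra).
  rewrite Rmin_left by (apply le_INR; lia). rewrite cumulative_turn_nat. simpl. ring.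
Qed.

Lemma direction_angle_beyond (th : R) : b <= th ->
  direction_angle th = th + 2 * PI * IZR (sg * Z.of_nat m).
Proof.
  intros Hth. pose proof (width_pos m a b Hm Hab). pose proof (INR_m_width m a b Hm).
  unfold direction_angle. rewrite Rmin_right.
  - rewrite cumulative_turn_nat, mult_IZR, <- INR_IZR_INZ. ring.
  - apply (Rmult_le_reg_r (width m a b)); [lra|]. unfold Rdiv.
    rewrite Rmult_assoc, Rinv_l by lra. lra.
Qed.

Lemma direction_on_interval (th r : R) : a <= th <= b ->
  let v := vsub (polar th r) (Nat.iter n F (polar th r)) in
  vscal (/ vnorm v) v = (cos (direction_angle th), sin (direction_angle th)).
Proof.
  intros Hth v. pose proof (width_pos m a b Hm Hab).
  destruct (angle_in_piece m a b Hm Hab th Hth) as [i [Hi [Hpc Hti]]].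
  set (s := phi a b m i th).
  assert (Hs : -1 <= s <= 1) by (apply (phi_range m a b Hm Hab); auto; lia).
  assert (Hphi : s = 2 * ((th - a) / width m a b - IZR (Z.of_nat (i - 1))) - 1).
  { unfold s. rewrite (phi_eq m a b Hm Hab) by lia.
    rewrite <- INR_IZR_INZ, minus_INR by lia. simpl. ring. }
  assert (Hturn : direction_angle th = th + A s + 2 * PI * IZR (sg * Z.of_nat (i - 1))).
  { unfold direction_angle. rewrite Rmin_left by (pose proof (le_INR i m ltac:(lia)); lra).
    rewrite (cumulative_turn_local (Z.of_nat (i - 1))), <- Hphi, mult_IZR; [ring|].
    rewrite <- INR_IZR_INZ, minus_INR by lia. simpl. lra. }
  unfold v. rewrite (iter_F_on_piece m c a b F Hm Hab HF Hc1 Hmono i) by auto. fold s.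
  change ((giter c n s - s) * width m a b / 2) with (angular_shift s).
  destruct (HA_dir s Hs) as [Hc Hsn].
  rewrite (direction_vsub_polar th r _ _ (A s) (hypot_W_pos s Hs) Hc Hsn).
  now rewrite Hturn, cos_period_Z, sin_period_Z.
Qed.

Lemma direction_off_interval (th r : R) : b < th < a + 2 * PI ->
  let v := vsub (polar th r) (Nat.iter n F (polar th r)) in
  vscal (/ vnorm v) v = (cos (direction_angle th), sin (direction_angle th)).
Proof.
  intros Hth v.
  assert (Hturn : direction_angle th = th + 0 + 2 * PI * IZR (sg * Z.of_nat m))
    by (rewrite direction_angle_beyond by lra; ring).
  unfold v. rewrite (iter_F_off m c a b F HF) by (apply (angle_off_interval a b); lra).
  replace (polar th (r - INR n)) with (polar (th + 0) (r + - INR n)) by (f_equal; ring).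
  pose proof exp_neg_INR_lt_1.
  rewrite (direction_vsub_polar th r 0 (- INR n) 0); rewrite ?hypot_off_interval;
    [now rewrite Hturn, cos_period_Z, sin_period_Z|lra| |].
  - rewrite !cos_0. field. lra.
  - rewrite !sin_0. unfold Rdiv. ring.
Qed.

Lemma direction_iter_F (th r : R) : a <= th < a + 2 * PI ->
  let v := vsub (polar th r) (Nat.iter n F (polar th r)) in
  vscal (/ vnorm v) v = (cos (direction_angle th), sin (direction_angle th)).
Proof.
  intros Hth. destruct (Rle_dec th b).
  - apply direction_on_interval. lra.
  - apply direction_off_interval. lra.
Qed.

Lemma loop_degree_iter_F (rho : R) : 0 < rho ->
  loop_degree (fun t => let x := circ rho t in
     vscal (/ vnorm (vsub x (Nat.iter n F x))) (vsub x (Nat.iter n F x)))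
   (1 + sg * Z.of_nat m).
Proof.
  intros Hrho. pose proof PI_RGT_0.
  set (B := fun u => direction_angle (a + 2 * PI * u)).
  set (K := 2 * PI * IZR (1 + sg * Z.of_nat m)).
  assert (HB : B 1 = B 0 + K).
  { unfold B, K. rewrite Rmult_0_r, Rplus_0_r, direction_angle_start, direction_angle_beyond
      by lra.
    rewrite plus_IZR. ring. }
  exists (fun t => periodic_ext B K ((2 * PI * t - a) / (2 * PI))). split; [|split].
  - intro x. apply (continuity_pt_comp (fun t => (2 * PI * t - a) / (2 * PI)) (periodic_ext B K));
      [reg|].
    apply continuity_periodic_ext; [exact HB|].
    apply clamp_continuous_of_continuity; [lra|].
    intro u. apply (continuity_pt_comp (fun u => a + 2 * PI * u) direction_angle);
      [reg|apply continuity_direction_angle].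
  - intros t Ht. cbv zeta.
    set (tau := (2 * PI * t - a) / (2 * PI)).
    pose proof (Int_part_bounds tau) as Hk. set (k := Int_part tau) in *.
    set (u := tau - IZR k).
    assert (Hc : circ rho t = polar (a + 2 * PI * u + 2 * PI * IZR k) (ln rho)).
    { unfold circ, polar. rewrite exp_ln by exact Hrho.
      replace (a + 2 * PI * u + 2 * PI * IZR k) with (2 * PI * t); [reflexivity|].
      unfold u, tau. field. lra. }
    rewrite Hc, polar_period_Z.
    rewrite (direction_iter_F _ (ln rho)) by (unfold u; split; nra).
    unfold periodic_ext. fold k u. fold (B u).
    replace (K * IZR k + B u) with (B u + 2 * PI * IZR ((1 + sg * Z.of_nat m) * k))
      by (unfold K; rewrite mult_IZR; ring).
    now rewrite cos_period_Z, sin_period_Z.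
  - replace ((2 * PI * 1 - a) / (2 * PI)) with ((2 * PI * 0 - a) / (2 * PI) + 1)
      by (field; lra).
    rewrite periodic_ext_shift by exact HB. unfold K. ring.
Qed.

End DirectionLift.

Lemma iter_F_index : fixed_point_index (Nat.iter n F) (1 + sg * Z.of_nat m).
Proof.
  destruct W_lift as [A [HA [HA_m1 [HA_1 HA_dir]]]].
  exists 1. split; [lra|split].
  - intros x Hx. apply iter_F_no_fixed_point. lra.
  - intros rho Hrho. apply (loop_degree_iter_F A); auto. lra.
Qed.

End FixedPointIndex.

Theorem mainTheorem4 :
  forall (m : nat) (c : R -> R) (a b : R) (F : pt -> pt),
    (1 <= m)%nat ->
    cont_on c (-1) 1 ->
    (forall x, -1 <= x <= 1 -> (c x = 1 <-> (x = -1 \/ x = 0 \/ x = 1))) ->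
    (forall x y, -1 <= x <= 1 -> -1 <= y <= 1 -> x < y -> x * c x < y * c y) ->
    0 < b - a < 2 * PI ->
    is_F a b m c F ->
    (forall n : nat, (1 <= n)%nat -> isolated_fixed_point (Nat.iter n F)) /\
    ((forall x, -1 <= x <= 1 -> 1/2 <= c x <= 1) ->
       forall n : nat, (1 <= n)%nat ->
         fixed_point_index (Nat.iter n F) (1 - Z.of_nat m)%Z) /\
    ((forall x, -1 <= x <= 1 -> 1 <= c x <= 2) ->
       forall n : nat, (1 <= n)%nat ->
         fixed_point_index (Nat.iter n F) (1 + Z.of_nat m)%Z).
Proof.
  intros m c a b F Hm Hcont Hc1 Hmono Hab HF.
  assert (HC : clamp_continuous c (-1) 1) by (apply clamp_continuous_of_cont_on; [lra|exact Hcont]).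
  assert (Hc_ne1 : forall x, -1 < x < 1 -> x <> 0 -> c x <> 1)
    by (intros x Hx Hx0 E; apply Hc1 in E; lra).
  split; [|split].
  - intros n Hn. exact (iter_F_isolated m c a b F n Hm Hn Hab HF Hc1 Hmono).
  - intros Hr n Hn. replace (1 - Z.of_nat m)%Z with (1 + -1 * Z.of_nat m)%Z by ring.
    apply (iter_F_index m c a b F n Hm Hn Hab HF Hc1 Hmono); [now right| |exact HC].
    intros x Hx Hx0. pose proof (Hr x ltac:(lra)). pose proof (Hc_ne1 x Hx Hx0). simpl. lra.
  - intros Hr n Hn. replace (1 + Z.of_nat m)%Z with (1 + 1 * Z.of_nat m)%Z by ring.
    apply (iter_F_index m c a b F n Hm Hn Hab HF Hc1 Hmono); [now left| |exact HC].
    intros x Hx Hx0. pose proof (Hr x ltac:(lra)). pose proof (Hc_ne1 x Hx Hx0). simpl. lra.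
Qed.
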